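(* Consider the graphs $G_j(t),F_j(t)$ ($j\ge1$, $t\ge0$) constructed from an edge-arrival process, and graphs $G'_j(t),F'_j(t)$ constructed in the same way from a second edge-arrival process which contains all arrivals of the first (and possibly others). Then $G_j(t)\subseteq G'_j(t)$ for all $j\ge1$ and $t\ge0$. Moreover, any edge $e$ present in both arrival processes which is contained in $F'_1(t)\cup\dots\cup F'_j(t)$ is also contained in $F_1(t)\cup\dots\cup F_j(t)$.
   Context: An edge-arrival process on the vertex set $[n]$ is a collection of (labelled, possibly parallel) edges between distinct vertices, each with an arrival time in $(0,\infty)$, arrival times distinct, with finitely many arrivals in each bounded time interval. From it one constructs: $G_1(t)$, the multigraph of edges arrived by time $t$; recursively, $F_k(t)$, the subgraph of $G_k(t)$ of those edges which at their arrival time $s\le t$ joined two different components of $G_k(s)$, and $G_{k+1}(t):=G_k(t)\setminus F_k(t)$. Inclusion of graphs means inclusion of edge sets (vertex set $[n]$ fixed). *)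

From Stdlib Require Import Reals List Relations.
From mathcomp Require Import all_boot.
Open Scope R_scope.

Set Implicit Arguments.
Unset Strict Implicit.

(* An edge-arrival process is modelled on a type of edge labels L:
   each label e has endpoints [ends e] in [n] and an arrival time [time e];
   the process is the predicate P selecting the labels present.
   Two processes on the same label data (ends, time) with P ⊆ P' means the
   second contains all arrivals (same edge, same endpoints, same time) of the first. *)
Definition is_edge_arrival_process (n : nat) (L : Type)
  (ends : L -> 'I_n * 'I_n) (time : L -> R) (P : L -> Prop) : Prop :=
  (forall e, P e -> fst (ends e) <> snd (ends e)) /\
  (forall e, P e -> 0 < time e) /\
  (forall e f, P e -> P f -> time e = time f -> e = f) /\
  (forall t : R, exists s : list L, forall e, P e -> time e <= t -> In e s).

Definition adj (n : nat) (L : Type) (ends : L -> 'I_n * 'I_n) (E : L -> Prop)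
  (a b : 'I_n) : Prop :=
  exists f, E f /\ ((fst (ends f) = a /\ snd (ends f) = b) \/
                    (fst (ends f) = b /\ snd (ends f) = a)).

Definition connected_in (n : nat) (L : Type) (ends : L -> 'I_n * 'I_n)
  (E : L -> Prop) : relation 'I_n :=
  clos_refl_trans 'I_n (adj ends E).

(* [Gaux k e]: the label e belongs (at some time) to G_{k+1}.
   An edge e of G_k is in F_k iff at its arrival time s = time e it joined two
   different components of G_k(s), i.e. its endpoints are not connected by the
   edges of G_k that arrived strictly before s (the components just before e is added). *)
Fixpoint Gaux (n : nat) (L : Type) (ends : L -> 'I_n * 'I_n) (time : L -> R)
  (P : L -> Prop) (k : nat) : L -> Prop :=
  match k with
  | 0 => P
  | k'.+1 => fun e =>
      Gaux ends time P k' e /\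
      ~ (Gaux ends time P k' e /\
         ~ connected_in ends (fun f => Gaux ends time P k' f /\ time f < time e)
             (fst (ends e)) (snd (ends e)))
  end.

Definition Faux (n : nat) (L : Type) (ends : L -> 'I_n * 'I_n) (time : L -> R)
  (P : L -> Prop) (k : nat) (e : L) : Prop :=
  Gaux ends time P k e /\
  ~ connected_in ends (fun f => Gaux ends time P k f /\ time f < time e)
      (fst (ends e)) (snd (ends e)).

Definition Gj (n : nat) (L : Type) (ends : L -> 'I_n * 'I_n) (time : L -> R)
  (P : L -> Prop) (j : nat) (t : R) (e : L) : Prop :=
  Gaux ends time P (j.-1) e /\ time e <= t.

Definition Fj (n : nat) (L : Type) (ends : L -> 'I_n * 'I_n) (time : L -> R)
  (P : L -> Prop) (j : nat) (t : R) (e : L) : Prop :=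
  Faux ends time P (j.-1) e /\ time e <= t.

From Stdlib Require Import Reals List Relations.
From mathcomp Require Import all_boot.
From Stdlib Require Import Classical.
Open Scope R_scope.

Set Implicit Arguments.
Unset Strict Implicit.

(* Extra edges only create extra connections.  Hence, by induction on k, an
   edge kept in G_{k+1} was already joined in G_k before its arrival, so also
   in the larger G'_k, and is kept in G'_{k+1}.  Dually, an edge of F'_i lies
   either in an earlier forest F_{i'} (i' < i) or in G_i, and then its
   endpoints, not joined in G'_i before it, are not joined in G_i either, so
   it lies in F_i. *)

Section Monotonicity.

Variables (n : nat) (L : Type) (ends : L -> 'I_n * 'I_n) (time : L -> R).

Lemma connected_in_mono (E E' : L -> Prop) (a b : 'I_n) :
  (forall f, E f -> E' f) -> connected_in ends E a b -> connected_in ends E' a b.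
Proof.
move=> sEE'; elim=> [x y [f [Ef endsf]] | x | x y z _ IHxy _ IHyz].
- by apply: rt_step; exists f; split; [apply: sEE' |].
- exact: rt_refl.
- exact: rt_trans IHxy IHyz.
Qed.

Lemma connected_before_mono (P P' : L -> Prop) (k : nat) (s : R) (a b : 'I_n) :
  (forall f, Gaux ends time P k f -> Gaux ends time P' k f) ->
  connected_in ends (fun f => Gaux ends time P k f /\ time f < s) a b ->
  connected_in ends (fun f => Gaux ends time P' k f /\ time f < s) a b.
Proof. by move=> sGG'; apply: connected_in_mono => f [/sGG' Gf lt_fs]. Qed.

Lemma Faux_subproc (P P' : L -> Prop) (k : nat) (e : L) :
  (forall f, Gaux ends time P k f -> Gaux ends time P' k f) ->
  Gaux ends time P k e -> Faux ends time P' k e -> Faux ends time P k e.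
Proof.
move=> sGG' Ge [_ not_conn']; split=> // conn.
by apply: not_conn'; apply: connected_before_mono conn.
Qed.

Lemma Gaux_subproc (P P' : L -> Prop) (k : nat) (e : L) :
  (forall f, P f -> P' f) -> Gaux ends time P k e -> Gaux ends time P' k e.
Proof.
move=> sPP'; elim: k e => [|k IHk] e /= => [/sPP' // | [Ge notF]].
split; first exact: IHk.
by move=> F'e; apply: notF; apply: Faux_subproc F'e.
Qed.

Lemma Gaux_or_Faux_before (P : L -> Prop) (e : L) (k : nat) :
  P e -> Gaux ends time P k e \/ exists i, (i < k)%N /\ Faux ends time P i e.
Proof.
move=> Pe; elim: k => [|k [Ge | [i [lt_ik Fe]]]]; [by left | |].
- have [Fe | notFe] := classic (Faux ends time P k e).
  + by right; exists k.
  + by left.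
- by right; exists i; split; first exact: ltnW.
Qed.

End Monotonicity.

Theorem lemma5p7 (n : nat) (L : Type) (ends : L -> 'I_n * 'I_n) (time : L -> R)
  (P P' : L -> Prop)
  (hP : is_edge_arrival_process ends time P)
  (hP' : is_edge_arrival_process ends time P')
  (hsub : forall e, P e -> P' e) :
  (forall (j : nat) (t : R), (1 <= j)%N -> 0 <= t ->
     forall e, Gj ends time P j t e -> Gj ends time P' j t e) /\
  (forall (j : nat) (t : R), (1 <= j)%N -> 0 <= t ->
     forall e, P e -> P' e ->
       (exists i, (1 <= i <= j)%N /\ Fj ends time P' i t e) ->
       (exists i, (1 <= i <= j)%N /\ Fj ends time P i t e)).
Proof.
split=> [j t _ _ e [Ge le_et] | j t _ _ e Pe _ [i [i_bounds [F'e le_et]]]].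
  by split=> //; apply: Gaux_subproc Ge.
have [Ge | [i' [lt_i'i Fe]]] := Gaux_or_Faux_before ends time i.-1 Pe.
- exists i; split=> //.
  by split=> //; apply: Faux_subproc (fun f => Gaux_subproc hsub) Ge F'e.
- exists i'.+1; split=> //; case/andP: i_bounds => _ le_ij.
  exact: leq_trans lt_i'i (leq_trans (leq_pred i) le_ij).
Qed.
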